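(* Let $\mathbf{L}$ be a Euclidean modal logic. Then $\mathtt{Fr}(\mathbf{L})$ is stable.
   Context: A frame is a pair $(W,R)$ with $W$ non-empty and $R\subseteq W\times W$. Modal formulas (propositional variables, $\bot,\neg,\vee,\Box$) have standard Kripke semantics; validity in a frame means truth at all points under all valuations. A (normal) modal logic contains all tautologies and K axioms and is closed under uniform substitution, modus ponens and necessitation; a Euclidean modal logic is one not containing $\bot$ and containing $\Diamond\psi\to\Box\Diamond\psi$ for all $\psi$. $\mathtt{Fr}(\mathbf{L})$ is the class of frames validating $\mathbf{L}$. First-order formulas use one binary relation symbol $\mathbf{R}$ and equality. For frames, $(W',R')\preceq(W,R)$ means every modal formula valid in $(W',R')$ is valid in $(W,R)$. Given a first-order formula $A(\mathbf{x}_1,\dots,\mathbf{x}_m,\mathbf{y})$ and $s_1,\dots,s_m\in W$ such that $T=\{t\in W:(W,R)\models A[s_1,\dots,s_m,t]\}$ is non-empty, the relativized reduct of $(W,R)$ with respect to $A$ and $s_1,\dots,s_m$ is the restriction $(T,R\cap(T\times T))$. A class $\mathcal{C}$ of frames is stable if there exist a first-order formula $A(\mathbf{x}_1,\dots,\mathbf{x}_m,\mathbf{y})$ and a sentence $B$ such that: (1) for every frame $(W',R')\in\mathcal{C}$ and all $s'_1,\dots,s'_m\in W'$, the relativized reduct of $(W',R')$ with respect to $A$ and $s'_1,\dots,s'_m$ (when it exists) is in $\mathcal{C}$; (2) for every frame $(W_0,R_0)\in\mathcal{C}$ there exist frames $(W',R'),(W'',R'')\in\mathcal{C}$ and $s'_1,\dots,s'_m\in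 W'$ such that $(W_0,R_0)$ is the relativized reduct of $(W',R')$ with respect to $A$ and $s'_1,\dots,s'_m$, $(W',R')\models B$, $(W'',R'')\not\models B$, and $(W',R')\preceq(W'',R'')$. *)

From Stdlib Require Import Arith.

Record frame : Type := Frame {
  world : Type;
  rel : world -> world -> Prop;
  world_inh : inhabited world }.

Definition frame_class := frame -> Prop.

Inductive mform : Type :=
| MVar : nat -> mform
| MBot : mform
| MNeg : mform -> mform
| MOr  : mform -> mform -> mform
| MBox : mform -> mform.

Definition MImp (a b : mform) : mform := MOr (MNeg a) b.
Definition MDia (a : mform) : mform := MNeg (MBox (MNeg a)).

Fixpoint forces (F : frame) (V : nat -> world F -> Prop) (w : world F)
  (phi : mform) : Prop :=
  match phi with
  | MVar n => V n w
  | MBot => False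
  | MNeg a => ~ forces F V w a
  | MOr a b => forces F V w a \/ forces F V w b
  | MBox a => forall v, rel F w v -> forces F V v a
  end.

Definition mvalid (F : frame) (phi : mform) : Prop :=
  forall (V : nat -> world F -> Prop) (w : world F), forces F V w phi.

Fixpoint msubst (s : nat -> mform) (phi : mform) : mform :=
  match phi with
  | MVar n => s n
  | MBot => MBot
  | MNeg a => MNeg (msubst s a)
  | MOr a b => MOr (msubst s a) (msubst s b)
  | MBox a => MBox (msubst s a)
  end.

(** tautologies: true under every Boolean assignment to the propositional
    atoms, where variables and boxed formulas count as atoms
    (= substitution instances of propositional tautologies) *)
Fixpoint peval (v : mform -> bool) (phi : mform) : bool :=
  match phi with
  | MVar n => v (MVar n)
  | MBot => false
  | MNeg a => negb (peval v a)
  | MOr a b => orb (peval v a) (peval v b)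
  | MBox a => v (MBox a)
  end.

Definition tautology (phi : mform) : Prop := forall v, peval v phi = true.

Definition normal_modal_logic (L : mform -> Prop) : Prop :=
  (forall phi, tautology phi -> L phi) /\
  L (MImp (MBox (MImp (MVar 0) (MVar 1)))
          (MImp (MBox (MVar 0)) (MBox (MVar 1)))) /\
  (forall s phi, L phi -> L (msubst s phi)) /\
  (forall phi psi, L (MImp phi psi) -> L phi -> L psi) /\
  (forall phi, L phi -> L (MBox phi)).

Definition euclidean_logic (L : mform -> Prop) : Prop :=
  normal_modal_logic L /\ ~ L MBot /\
  (forall psi, L (MImp (MDia psi) (MBox (MDia psi)))).

Definition Fr (L : mform -> Prop) : frame_class :=
  fun F => forall phi, L phi -> mvalid F phi.

Definition frame_preceq (F1 F2 : frame) : Prop :=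
  forall phi, mvalid F1 phi -> mvalid F2 phi.

Inductive fform : Type :=
| FRel : nat -> nat -> fform
| FEq  : nat -> nat -> fform
| FBot : fform
| FNeg : fform -> fform
| FOr  : fform -> fform -> fform
| FEx  : nat -> fform -> fform.

Definition env_upd {W : Type} (e : nat -> W) (x : nat) (d : W) : nat -> W :=
  fun y => if Nat.eqb y x then d else e y.

Fixpoint fsat (F : frame) (e : nat -> world F) (A : fform) : Prop :=
  match A with
  | FRel x y => rel F (e x) (e y)
  | FEq x y => e x = e y
  | FBot => False
  | FNeg a => ~ fsat F e a
  | FOr a b => fsat F e a \/ fsat F e b
  | FEx x a => exists d, fsat F (env_upd e x d) a
  end.

Fixpoint free_in (z : nat) (A : fform) : Prop :=
  match A with
  | FRel x y => z = x \/ z = y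
  | FEq x y => z = x \/ z = y
  | FBot => False
  | FNeg a => free_in z a
  | FOr a b => free_in z a \/ free_in z b
  | FEx x a => z <> x /\ free_in z a
  end.

(** A(x_1,...,x_m,y): variables 0..m-1 play the role of x_1..x_m and
    variable m plays the role of y. *)
Definition fv_among (m : nat) (A : fform) : Prop :=
  forall z, free_in z A -> z <= m.

Definition sentence (B : fform) : Prop := forall z, ~ free_in z B.

Definition fmodels (F : frame) (B : fform) : Prop :=
  forall e : nat -> world F, fsat F e B.

Definition par_env {W : Type} (m : nat) (s : nat -> W) (t : W) : nat -> W :=
  fun i => if Nat.ltb i m then s i else t.

Definition reduct_dom (F : frame) (A : fform) (m : nat) (s : nat -> world F)
  (t : world F) : Prop := fsat F (par_env m s t) A.

Definition reduct_frame (F : frame) (A : fform) (m : nat) (s : nat -> world F)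
  (h : exists t, reduct_dom F A m s t) : frame :=
  {| world := { t : world F | reduct_dom F A m s t };
     rel := fun a b => rel F (proj1_sig a) (proj1_sig b);
     world_inh := match h with ex_intro _ t ht => inhabits (exist _ t ht) end |}.

Definition is_reduct_of (F0 F : frame) (A : fform) (m : nat)
  (s : nat -> world F) : Prop :=
  exists f : world F0 -> world F,
    (forall a b, f a = f b -> a = b) /\
    (forall t, reduct_dom F A m s t <-> exists a, f a = t) /\
    (forall a b, rel F0 a b <-> rel F (f a) (f b)).

Definition stable (C : frame_class) : Prop :=
  exists (m : nat) (A : fform) (B : fform),
    fv_among m A /\ sentence B /\
    (forall F', C F' -> forall (s : nat -> world F')
       (h : exists t, reduct_dom F' A m s t), C (reduct_frame F' A m s h)) /\
    (forall F0, C F0 ->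
       exists F' F'' (s : nat -> world F'),
         C F' /\ C F'' /\ is_reduct_of F0 F' A m s /\
         fmodels F' B /\ ~ fmodels F'' B /\ frame_preceq F' F'').

(* Frames of a Euclidean logic are Euclidean. Let A(x, y) say that y is
   neither x nor reaches x in one or two steps; in a Euclidean frame this set
   is closed under successors, so every relativized reduct is a generated
   subframe and stays in Fr(L). Let B say that there are two worlds.
   Every Euclidean frame F0 has a one-point frame P (reflexive iff F0 has an
   edge) as a bounded morphic image of a generated subframe, so P is in Fr(L).
   Then F0 is the reduct of the disjoint union F0 + P at the point of P,
   F0 + P satisfies B, P does not, and F0 + P ⪯ P because P is a generated
   subframe of F0 + P. *)

From Stdlib Require Import Classical ProofIrrelevance Lia.

Definition bounded_morphism (G F : frame) (f : world G -> world F) : Prop :=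
  (forall a b, rel G a b -> rel F (f a) (f b)) /\
  (forall a v, rel F (f a) v -> exists b, rel G a b /\ f b = v).

Section BoundedMorphism.

Variables (G F : frame) (f : world G -> world F).
Hypothesis Hf : bounded_morphism G F f.

Lemma forces_bounded_morphism (VG : nat -> world G -> Prop)
  (VF : nat -> world F -> Prop) (HV : forall n a, VG n a <-> VF n (f a)) :
  forall phi a, forces G VG a phi <-> forces F VF (f a) phi.
Proof.
  destruct Hf as [forth back].
  induction phi as [n| |phi IH|phi1 IH1 phi2 IH2|phi IH]; intro a; simpl.
  - apply HV.
  - tauto.
  - rewrite IH; tauto.
  - rewrite IH1, IH2; tauto.
  - split.
    + intros H v Hv. destruct (back a v Hv) as [b [Hb <-]].
      apply IH, H, Hb.
    + intros H b Hb. apply IH, H, forth, Hb.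
Qed.

Lemma forces_image_of_mvalid phi :
  mvalid G phi -> forall V a, forces F V (f a) phi.
Proof.
  intros Hphi V a.
  apply (forces_bounded_morphism (fun n b => V n (f b))); [tauto|].
  apply Hphi.
Qed.

Lemma mvalid_surj_bounded_morphism phi :
  (forall w, exists a, f a = w) -> mvalid G phi -> mvalid F phi.
Proof.
  intros Hsurj Hphi V w. destruct (Hsurj w) as [a <-].
  exact (forces_image_of_mvalid phi Hphi V a).
Qed.

Lemma mvalid_inj_bounded_morphism phi :
  (forall a b, f a = f b -> a = b) -> mvalid F phi -> mvalid G phi.
Proof.
  intros Hinj Hphi VG a.
  apply (forces_bounded_morphism VG (fun n w => exists b, f b = w /\ VG n b)).
  - intros n b. split; [eauto|].
    intros [b' [Hb' HV]]. rewrite <- (Hinj _ _ Hb'). exact HV.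
  - apply Hphi.
Qed.

End BoundedMorphism.

Definition subframe (F : frame) (S : world F -> Prop)
  (h : exists t, S t) : frame :=
  {| world := { t : world F | S t };
     rel := fun a b => rel F (proj1_sig a) (proj1_sig b);
     world_inh :=
       match h with ex_intro _ t ht => inhabits (exist _ t ht) end |}.

Definition succ_closed (F : frame) (S : world F -> Prop) : Prop :=
  forall u v, S u -> rel F u v -> S v.

Lemma mvalid_generated_subframe (F : frame) (S : world F -> Prop) h phi :
  succ_closed F S -> mvalid F phi -> mvalid (subframe F S h) phi.
Proof.
  intro Hcl.
  apply (mvalid_inj_bounded_morphism (subframe F S h) F (@proj1_sig _ S)).
  - split; [auto|].
    intros [u Hu] v Huv. exists (exist _ v (Hcl u v Hu Huv)). auto.
  - intros [a Ha] [b Hb]. simpl. apply subset_eq_compat.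
Qed.

Definition point_frame (r : Prop) : frame :=
  {| world := unit; rel := fun _ _ => r; world_inh := inhabits tt |}.

Lemma mvalid_point_of_generated_subframe (F : frame) (S : world F -> Prop)
  (r : Prop) (h : exists t, S t) :
  succ_closed F S -> (forall u, S u -> ((exists v, rel F u v) <-> r)) ->
  forall phi, mvalid F phi -> mvalid (point_frame r) phi.
Proof.
  intros Hcl Hr phi Hphi.
  apply (mvalid_surj_bounded_morphism (subframe F S h) (point_frame r)
           (fun _ => tt)).
  - split.
    + intros [u Hu] [v Hv] Huv. apply (Hr u Hu). exists v. exact Huv.
    + intros [u Hu] [] Hrel. destruct (proj2 (Hr u Hu) Hrel) as [v Hv].
      exists (exist _ v (Hcl u v Hu Hv)). auto.
  - intros []. destruct h as [t Ht]. exists (exist _ t Ht). reflexivity.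
  - apply mvalid_generated_subframe; assumption.
Qed.

Definition sum_rel (F G : frame) (a b : world F + world G) : Prop :=
  match a, b with
  | inl x, inl y => rel F x y
  | inr x, inr y => rel G x y
  | _, _ => False
  end.

Definition frame_sum (F G : frame) : frame :=
  {| world := (world F + world G)%type; rel := sum_rel F G;
     world_inh := match world_inh F with inhabits x => inhabits (inl x) end |}.

Lemma inl_bounded_morphism (F G : frame) :
  bounded_morphism F (frame_sum F G) inl.
Proof.
  split; [simpl; auto|].
  intros a [v|v] Hv; simpl in Hv; [eauto|contradiction].
Qed.

Lemma inr_bounded_morphism (F G : frame) :
  bounded_morphism G (frame_sum F G) inr.
Proof.
  split; [simpl; auto|].
  intros a [v|v] Hv; simpl in Hv; [contradiction|eauto].
Qed.

Lemma mvalid_frame_sum (F G : frame) phi :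
  mvalid F phi -> mvalid G phi -> mvalid (frame_sum F G) phi.
Proof.
  intros HF HG V [x|y].
  - exact (forces_image_of_mvalid _ _ _ (inl_bounded_morphism F G) phi HF V x).
  - exact (forces_image_of_mvalid _ _ _ (inr_bounded_morphism F G) phi HG V y).
Qed.

Definition euclidean (F : frame) : Prop :=
  forall x y z, rel F x y -> rel F x z -> rel F y z.

Lemma euclidean_of_Fr (L : mform -> Prop) (F : frame) :
  (forall psi, L (MImp (MDia psi) (MBox (MDia psi)))) ->
  Fr L F -> euclidean F.
Proof.
  intros H5 HF x y z Hxy Hxz.
  (* Axiom 5 at x, with p true exactly at z. *)
  destruct (HF _ (H5 (MVar 0)) (fun _ w => w = z) x) as [H|H]; simpl in H.
  - exfalso. apply H. intro Hnot. exact (Hnot z Hxz eq_refl).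
  - apply NNPP. intro Hyz. apply (H y Hxy). intros w Hyw ->. contradiction.
Qed.

Lemma euclidean_reflexive_succ (F : frame) x y :
  euclidean F -> rel F x y -> rel F y y.
Proof. intros E Hxy. exact (E x y y Hxy Hxy). Qed.

Lemma euclidean_point_frame (F : frame) :
  euclidean F ->
  exists r, forall phi, mvalid F phi -> mvalid (point_frame r) phi.
Proof.
  intro E.
  destruct (classic (exists u v, rel F u v)) as [[u [v Huv]]|Hnone].
  - exists True.
    assert (Hvv : rel F v v) by exact (euclidean_reflexive_succ F u v E Huv).
    apply (mvalid_point_of_generated_subframe F (rel F v) True
             (ex_intro _ v Hvv)).
    + intros w z Hvw Hwz.
      assert (Hwv : rel F w v) by exact (E v w v Hvw Hvv).
      exact (E w v z Hwv Hwz).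
    + intros w Hvw. split; [auto|].
      intros _. exists w. exact (euclidean_reflexive_succ F v w E Hvw).
  - exists False. destruct (world_inh F) as [u0].
    apply (mvalid_point_of_generated_subframe F (fun _ => True) False
             (ex_intro _ u0 I)).
    + intros ? ? ? ?. exact I.
    + intros w _. split; [|tauto]. intros [z Hz]. apply Hnone. eauto.
Qed.

Definition fand (a b : fform) : fform := FNeg (FOr (FNeg a) (FNeg b)).

Definition far_form : fform :=
  fand (FNeg (FEq 1 0))
    (fand (FNeg (FRel 1 0)) (FNeg (FEx 2 (fand (FRel 1 2) (FRel 2 0))))).

Definition two_worlds_form : fform := FEx 0 (FEx 1 (FNeg (FEq 0 1))).

Definition far_from (F : frame) (x t : world F) : Prop :=
  t <> x /\ ~ rel F t x /\ ~ (exists z, rel F t z /\ rel F z x).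

Lemma far_form_fv : fv_among 1 far_form.
Proof. intros z Hz. simpl in Hz. intuition lia. Qed.

Lemma two_worlds_form_sentence : sentence two_worlds_form.
Proof. intros z Hz. simpl in Hz. intuition. Qed.

Lemma reduct_dom_far_form (F : frame) s t :
  reduct_dom F far_form 1 s t <-> far_from F (s 0) t.
Proof.
  unfold reduct_dom, far_form, fand, far_from; simpl.
  cbv [env_upd par_env]; simpl.
  split.
  - intro H. apply not_or_and in H as [H1 H2].
    apply NNPP in H1. apply NNPP, not_or_and in H2 as [H2 H3].
    apply NNPP in H2. apply NNPP in H3.
    repeat split; [exact H1|exact H2|].
    intros [z Hz]. apply H3. exists z. tauto.
  - intros [H1 [H2 H3]] [H|H]; apply H; [exact H1|].
    intros [H'|H']; apply H'; [exact H2|].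
    intros [z Hz]. apply H3. exists z. simpl in Hz.
    apply not_or_and in Hz as [Ha Hb].
    apply NNPP in Ha; apply NNPP in Hb. tauto.
Qed.

Lemma far_from_succ_closed (F : frame) x :
  euclidean F -> succ_closed F (far_from F x).
Proof.
  intros E t v [Htx [Htx1 Htx2]] Htv. repeat split.
  - intros ->. contradiction.
  - intro Hvx. apply Htx2. eauto.
  - intros [u [Hvu Hux]]. apply Htx2. exists v. split; [exact Htv|].
    assert (Huv : rel F u v)
      by exact (E v u v Hvu (euclidean_reflexive_succ F t v E Htv)).
    exact (E u v x Huv Hux).
Qed.

Lemma fmodels_two_worlds (F : frame) :
  fmodels F two_worlds_form <-> exists a b : world F, a <> b.
Proof.
  destruct (world_inh F) as [w].
  unfold fmodels; simpl; cbv [env_upd]; simpl. split.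
  - intro H. apply (H (fun _ => w)).
  - intros Hab _. exact Hab.
Qed.

Lemma frame_sum_point_reduct (F : frame) (r : Prop) :
  is_reduct_of F (frame_sum F (point_frame r)) far_form 1 (fun _ => inr tt).
Proof.
  exists inl. split; [|split].
  - intros a b H. injection H. auto.
  - intro t. rewrite reduct_dom_far_form. split.
    + destruct t as [x|[]]; [eauto|]. intros [H _]. contradiction.
    + intros [a <-]. split; [discriminate|]. split; [simpl; auto|].
      intros [[z|z] [H1 H2]]; simpl in *; auto.
  - simpl. tauto.
Qed.

Lemma mvalid_far_reduct (F : frame) s h phi :
  euclidean F -> mvalid F phi -> mvalid (reduct_frame F far_form 1 s h) phi.
Proof.
  (* reduct_frame is definitionally subframe on reduct_dom. *)
  intro E. apply mvalid_generated_subframe.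
  intros u v Hu Huv. apply reduct_dom_far_form in Hu.
  apply reduct_dom_far_form.
  exact (far_from_succ_closed F (s 0) E u v Hu Huv).
Qed.

Lemma frame_sum_preceq_r (F G : frame) : frame_preceq (frame_sum F G) G.
Proof.
  intros phi Hphi.
  apply (mvalid_inj_bounded_morphism G (frame_sum F G) inr
           (inr_bounded_morphism F G)); [|exact Hphi].
  intros a b H. injection H. auto.
Qed.

Theorem lemma51 (L : mform -> Prop) (HL : euclidean_logic L) : stable (Fr L).
Proof.
  destruct HL as [_ [_ H5]].
  exists 1, far_form, two_worlds_form.
  split; [exact far_form_fv|]. split; [exact two_worlds_form_sentence|].
  split.
  - intros F HF s h phi Hphi.
    apply mvalid_far_reduct; [exact (euclidean_of_Fr L F H5 HF)|].
    exact (HF phi Hphi).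
  - intros F0 HF0.
    destruct (euclidean_point_frame F0 (euclidean_of_Fr L F0 H5 HF0)) as [r Hr].
    assert (HP : Fr L (point_frame r))
      by (intros phi Hphi; apply Hr, HF0, Hphi).
    exists (frame_sum F0 (point_frame r)), (point_frame r), (fun _ => inr tt).
    repeat split.
    + intros phi Hphi. apply mvalid_frame_sum; [apply HF0|apply HP]; exact Hphi.
    + exact HP.
    + apply frame_sum_point_reduct.
    + apply fmodels_two_worlds. destruct (world_inh F0) as [u0].
      exists (inl u0), (inr tt). discriminate.
    + intros [a [b Hab]]%fmodels_two_worlds. apply Hab.
      destruct a, b. reflexivity.
    + apply frame_sum_preceq_r.
Qed.
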